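(* Let $R$ be a commutative Noetherian ring, $M$ a faithful primeful $R$-module having at least one prime submodule, $X=\mathrm{Spec}(M)$, $K\le M$, and $U=X\setminus V(K)$. If $N$ is a $(K:M)$-torsion $R$-module, then $\mathcal{A}(N,M)(U)=0$.
   Context: For a submodule $L$ of an $R$-module $M$, $(L:M)=\{r\in R\mid rM\subseteq L\}$. A submodule $P$ of $M$ is prime if $P\neq M$ and whenever $rm\in P$ ($r\in R$, $m\in M$) then $r\in (P:M)$ or $m\in P$. $\mathrm{Spec}(M)$ is the set of prime submodules. $M$ is faithful if $\mathrm{Ann}_R(M)=0$; primeful if $M=0$ or $\mathrm{Spec}(M)\to\mathrm{Spec}(R/\mathrm{Ann}(M))$, $P\mapsto(P:M)/\mathrm{Ann}(M)$, is surjective. For $L\le M$, $V(L)=\{P\in X\mid (P:M)\supseteq (L:M)\}$; these are the closed sets of the Zariski topology. For open $U\subseteq X$, $\mathrm{Supp}(U)=\{(P:M)\mid P\in U\}$. $\mathcal{A}(N,M)(U)$ is the $R$-module of families $(\gamma_{\mathfrak p})_{\mathfrak p\in\mathrm{Supp}(U)}\in\prod_{\mathfrak p\in\mathrm{Supp}(U)}N_{\mathfrak p}$ such that for each $Q\in U$ there exist an open neighbourhood $W\subseteq U$ of $Q$ and $s\in R$, $m\in N$ with $s\notin(P:M)$ and $\gamma_{(P:M)}=m/s$ for every $P\in W$. $N$ is $I$-torsion if every element of $N$ is annihilated by some power of $I$. *)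

From HB Require Import structures.
From mathcomp Require Import all_boot all_order all_algebra.
Set Implicit Arguments. Unset Strict Implicit. Unset Printing Implicit Defensive.
Import GRing.Theory.
Local Open Scope ring_scope.

Section ModuleDefs.
Variable R : comNzRingType.

Definition ideal (I : R -> Prop) : Prop :=
  [/\ I 0, (forall a b, I a -> I b -> I (a + b)) & (forall r a, I a -> I (r * a))].

Definition prime_ideal (p : R -> Prop) : Prop :=
  [/\ ideal p, ~ p 1 & (forall a b, p (a * b) -> p a \/ p b)].

Definition gen_ideal (S : R -> Prop) : R -> Prop :=
  fun r => forall J, ideal J -> (forall x, S x -> J x) -> J r.

Definition ideal_mul (I J : R -> Prop) : R -> Prop :=
  gen_ideal (fun r => exists a b, [/\ I a, J b & r = a * b]).

Fixpoint ideal_pow (I : R -> Prop) (k : nat) : R -> Prop :=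
  match k with
  | 0%N => fun _ => True
  | k'.+1 => ideal_mul (ideal_pow I k') I
  end.

Definition noetherian_ring : Prop :=
  forall I : nat -> R -> Prop,
    (forall n, ideal (I n)) ->
    (forall n r, I n r -> I n.+1 r) ->
    exists n, forall k, (n <= k)%N -> forall r, I k r -> I n r.

Variable M : lmodType R.

Definition submodule (L : M -> Prop) : Prop :=
  [/\ L 0, (forall x y, L x -> L y -> L (x + y)) & (forall r x, L x -> L (r *: x))].

Definition colon (L : M -> Prop) : R -> Prop := fun r => forall m, L (r *: m).

Definition prime_submodule (P : M -> Prop) : Prop :=
  [/\ submodule P, (exists m, ~ P m) &
      (forall r m, P (r *: m) -> colon P r \/ P m)].

Definition Ann : R -> Prop := fun r => forall m : M, r *: m = 0.

Definition faithful : Prop := forall r, Ann r -> r = 0.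

(* primeful: M = 0, or P |-> (P:M)/Ann(M) : Spec(M) -> Spec(R/Ann(M)) is onto;
   the prime ideals of R/Ann(M) are the p/Ann(M) with p prime, Ann(M) <= p. *)
Definition primeful : Prop :=
  (forall m : M, m = 0) \/
  (forall p, prime_ideal p -> (forall r, Ann r -> p r) ->
     exists P, prime_submodule P /\ (forall r, colon P r <-> p r)).

Definition V (L : M -> Prop) : (M -> Prop) -> Prop :=
  fun P => prime_submodule P /\ (forall r, colon L r -> colon P r).

Definition zariski_open (W : (M -> Prop) -> Prop) : Prop :=
  exists L, submodule L /\
    forall P, prime_submodule P -> (W P <-> ~ V L P).

(* ---------- localization N_p, elements m/s represented by pairs ---------- *)
Variable N : lmodType R.

Definition loc_eq (p : R -> Prop) (x y : N * R) : Prop :=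
  exists t, ~ p t /\ t *: (y.2 *: x.1 - x.2 *: y.1) = 0.

Definition torsion (I : R -> Prop) : Prop :=
  forall n : N, exists k, forall r, ideal_pow I k r -> r *: n = 0.

(* gamma is an element of A(N,M)(U): gamma (P:M) is (a representative m/s of)
   the component in N_{(P:M)} for (P:M) in Supp(U). *)
Definition is_section (U : (M -> Prop) -> Prop) (gamma : (R -> Prop) -> N * R) : Prop :=
  (forall P, U P -> ~ colon P (gamma (colon P)).2) /\
  (forall Q, U Q ->
     exists W, [/\ zariski_open W, (forall P, W P -> U P), W Q &
       exists s m, forall P, W P ->
         ~ colon P s /\ loc_eq (colon P) (gamma (colon P)) (m, s)]).

Definition section_zero (U : (M -> Prop) -> Prop) (gamma : (R -> Prop) -> N * R) : Prop :=
  forall P, U P -> loc_eq (colon P) (gamma (colon P)) (0, 1).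

End ModuleDefs.

(* A section is zero as soon as every stalk it lives in is zero. At a point P
   outside V(K) the prime ideal p = (P:M) misses some r in (K:M); every element
   of the (K:M)-torsion module N is killed by a power of r, and that power lies
   outside p, so N_p = 0. *)
From mathcomp Require Import all_boot all_order all_algebra.
From Stdlib Require Import Classical.
Set Implicit Arguments. Unset Strict Implicit.
Local Open Scope ring_scope.
Import GRing.Theory.

Lemma ideal_pow_exprn (R : comNzRingType) (I : R -> Prop) (r : R) (k : nat) :
  I r -> ideal_pow I k (r ^+ k).
Proof.
move=> Ir; elim: k => [|k IH] //=.
by rewrite exprSr => J _ HJ; apply: HJ; exists (r ^+ k), r.
Qed.

Lemma prime_colon_exprn (R : comNzRingType) (M : lmodType R) (P : M -> Prop)
    (r : R) (k : nat) :
  prime_submodule P -> ~ colon P r -> ~ colon P (r ^+ k).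
Proof.
move=> [_ _ P_prime] Pr; elim: k => [|k IH] Prk.
  by apply: Pr => m; have := Prk (r *: m); rewrite scale1r.
by apply: IH => m; have := Prk m; rewrite exprS -scalerA => /P_prime[].
Qed.

Lemma notV_colon (R : comNzRingType) (M : lmodType R) (K P : M -> Prop) :
  prime_submodule P -> ~ V K P -> exists2 r, colon K r & ~ colon P r.
Proof.
move=> PP PnV; apply: NNPP => noR; apply: PnV; split => // r Kr.
by apply: NNPP => Pr; apply: noR; exists r.
Qed.

Lemma loc_eq0_torsion (R : comNzRingType) (N : lmodType R) (I p : R -> Prop)
    (r : R) (x : N * R) :
  torsion N I -> (forall k, ~ p (r ^+ k)) -> I r -> loc_eq p x (0, 1).
Proof.
case: x => n s tors pr Ir; have [k kill_n] := tors n.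
exists (r ^+ k); split; first exact: pr.
by rewrite /= scale1r scaler0 subr0; apply: kill_n; apply: ideal_pow_exprn.
Qed.

Theorem corollary3p15 (R : comNzRingType) (M : lmodType R) (N : lmodType R)
  (K : M -> Prop) :
  noetherian_ring R ->
  faithful M -> primeful M -> (exists P : M -> Prop, prime_submodule P) ->
  submodule K ->
  torsion N (colon K) ->
  forall gamma : (R -> Prop) -> N * R,
    is_section (fun P : M -> Prop => prime_submodule P /\ ~ V K P) gamma ->
    section_zero (fun P : M -> Prop => prime_submodule P /\ ~ V K P) gamma.
Proof.
move=> _ _ _ _ _ tors gamma _ P [PP PnV].
have [r Kr Pr] := notV_colon PP PnV.
apply: loc_eq0_torsion tors _ Kr => k.
exact: prime_colon_exprn.
Qed.
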